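(* Let $K\in\mathbb N$, $\delta\in(0,1)$, and for each $i\in[K]$ let $C_i:[0,1]\to 2^{\Theta_i}$ be a nonincreasing, upper semicontinuous confidence-interval constructor such that $C_i(\alpha)$ is a $(1-\alpha)$-CI for $\theta_i$. Let $C_i^{\mathrm{cal}}$ be the e-CI constructor obtained by calibrating $C_i$ with $f^{\mathrm{BY}(\delta,K)}$, i.e. $C_i^{\mathrm{cal}}(\alpha)=\{\theta\in\Theta_i: f^{\mathrm{BY}(\delta,K)}(P_i^{\mathrm{dual}}(\theta))<1/\alpha\}$ where $P_i^{\mathrm{dual}}(\theta)=\inf\{\alpha\in[0,1]:\theta\notin C_i(\alpha)\}$. Then for any selected set $S\subseteq[K]$, the BY procedure under arbitrary dependence at level $\delta$, which reports $C_i(\delta|S|/(K\ell_K))$ for $i\in S$, outputs the same intervals as the e-BY procedure at level $\delta$ applied to $C_i^{\mathrm{cal}}$, which reports $C_i^{\mathrm{cal}}(\delta|S|/K)$ for $i\in S$.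
   Context: $\ell_K=\sum_{k=1}^K1/k$. The calibrator is $f^{\mathrm{BY}(\delta,K)}(x)=K/(\delta\lceil K\ell_K x/\delta\rceil)$ for $x\le\delta/\ell_K$ and $0$ for $x>\delta/\ell_K$; a calibrator is a nonincreasing $f:[0,1]\to[0,\infty]$ with $\int_0^1 f\le1$. *)

From HB Require Import structures.
From mathcomp Require Import all_boot all_order all_algebra.
From mathcomp Require Import all_classical all_reals all_analysis.
Set Implicit Arguments. Unset Strict Implicit. Unset Printing Implicit Defensive.
Import Order.TTheory GRing.Theory Num.Theory.
Import numFieldNormedType.Exports.
Local Open Scope classical_set_scope.
Local Open Scope ring_scope.

Definition ellK (R : realType) (K : nat) : R := \sum_(1 <= k < K.+1) (k%:R)^-1.

Definition fBY (R : realType) (delta : R) (K : nat) (x : R) : \bar R :=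
  if x <= delta / ellK R K then
    let c : int := Num.ceil (K%:R * ellK R K * x / delta) in
    if c == 0%R then +oo%E else ((K%:R / (delta * c%:~R))%:E)
  else 0%E.

Definition calibrator (R : realType) (f : R -> \bar R) : Prop :=
  (forall x y, 0 <= x -> x <= y -> y <= 1 -> (f y <= f x)%E) /\
  (forall x, 0 <= x <= 1 -> (0 <= f x)%E) /\
  (\int[lebesgue_measure]_(x in `[0%R, 1%R]) f x <= 1)%E.

(* a CI constructor alpha |-> C(alpha), for a fixed realization of the data *)
Definition nonincreasing_CI (R : realType) (T : Type) (C : R -> set T) : Prop :=
  forall a b : R, 0 <= a -> a <= b -> b <= 1 -> C b `<=` C a.

(* upper semicontinuity: for each theta the non-coverage indicator
   alpha |-> 1{theta \notin C(alpha)} on [0,1] is upper semicontinuous,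
   i.e. {alpha in [0,1] | theta \notin C(alpha)} is closed. *)
Definition usc_CI (R : realType) (T : Type) (C : R -> set T) : Prop :=
  forall t : T, closed [set a : R | (0 <= a <= 1) /\ ~ C a t].

(* dual p-value P^dual(theta) = inf{alpha in [0,1] : theta \notin C(alpha)},
   the infimum being taken in [0,1] (so inf of the empty set is 1). *)
Definition pdual (R : realType) (T : Type) (C : R -> set T) (t : T) : R :=
  let A := [set a : R | (0 <= a <= 1) /\ ~ C a t] in
  if pselect (exists a, A a) then inf A else 1.

Definition calibrate (R : realType) (T : Type) (f : R -> \bar R)
    (C : R -> set T) (alpha : R) : set T :=
  [set t | (f (pdual C t) < (alpha%:E)^-1)%E].

From HB Require Import structures.
From mathcomp Require Import all_boot all_order all_algebra.
From mathcomp Require Import all_classical all_reals all_analysis.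
Import Order.TTheory GRing.Theory Num.Theory.
Import numFieldNormedType.Exports.
Local Open Scope classical_set_scope.
Local Open Scope ring_scope.

(* Both sides are the set of [t] with [delta |S| / (K ell_K) < P^dual(t)].
   For a nonincreasing constructor whose non-coverage set
   {a in [0,1] | t \notin C a} is closed, that set contains its infimum
   P^dual(t), so [t \in C a <-> a < P^dual(t)] for [a] in [0,1).
   On the calibrated side, for an integer [1 <= s <= K],
   f^BY(x) < K / (delta s) iff s < ceil(K ell_K x / delta), which for an
   integer [s] is the same as s < K ell_K x / delta; above delta / ell_K the
   calibrator vanishes and [x] already exceeds the threshold. *)

Lemma closed_inf_mem {R : realType} {A : set R} :
  closed A -> A !=set0 -> has_lbound A -> A (inf A).
Proof.
move=> cA A0 lA; apply: (itv_closed_infimums A0 cA); split.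
- exact: ge_inf.
- by move=> y; apply: lb_le_inf.
Qed.

Section DualPValue.
Context {R : realType} {T : Type} {C : R -> set T}.

Lemma pdual_ge0 (t : T) : 0 <= pdual C t.
Proof.
rewrite /pdual; set A := [set b | _ /\ _].
case: pselect => [A0|_] /=; last exact: ler01.
by apply: lb_le_inf A0 _ => b [/andP[]].
Qed.

Hypotheses (C_noninc : nonincreasing_CI C) (C_usc : usc_CI C).

Lemma CI_mem_lt_pdual (t : T) (a : R) :
  0 <= a < 1 -> C a t <-> a < pdual C t.
Proof.
move=> /andP[a0 a1]; rewrite /pdual.
set A := [set b | (0 <= b <= 1) /\ ~ C b t].
have Aa : ~ C a t -> A a by split; rewrite ?a0 ?ltW.
case: pselect => [A0|nA0] /=; last first.
  by split=> // _; apply: contrapT => /Aa aA; apply: nA0; exists a.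
have lA : has_lbound A by exists 0 => b [/andP[]].
split=> [Cat|lt_a_inf].
- have [/andP[inf_ge0 _] notC_inf] : A (inf A) :=
    closed_inf_mem (C_usc t) A0 lA.
  rewrite ltNge; apply/negP => inf_le_a; apply: notC_inf.
  exact: C_noninc inf_ge0 inf_le_a (ltW a1) _ Cat.
- apply: contrapT => /Aa /(ge_inf lA).
  by rewrite leNgt lt_a_inf.
Qed.

End DualPValue.

Lemma ellK_ge1 (R : realType) (K : nat) : (0 < K)%N -> 1 <= ellK R K.
Proof. by move=> K0; rewrite /ellK big_ltn // invr1 lerDl sumr_ge0. Qed.

Lemma fBY_lt_inv {R : realType} {delta x : R} {K s : nat} :
  0 < delta -> (0 < s <= K)%N -> 0 <= x ->
  (fBY delta K x < ((delta * s%:R / K%:R)%:E)^-1)%E <->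
  delta * s%:R / (K%:R * ellK R K) < x.
Proof.
move=> d0 /andP[s0 sK] x0.
have K0 : 0 < K%:R :> R by rewrite ltr0n (leq_trans s0 sK).
have s0R : 0 < s%:R :> R by rewrite ltr0n.
have l0 : 0 < ellK R K := lt_le_trans ltr01 (ellK_ge1 R K (leq_trans s0 sK)).
rewrite inver gt_eqF ?mulr_gt0 ?invr_gt0 // invf_div /fBY.
case: ifP => [x_le|/negbT]; last first.
  rewrite -ltNge lte_fin divr_gt0 ?mulr_gt0 // => lt_x; split=> // _.
  apply: le_lt_trans lt_x.
  by rewrite invfM mulrA ler_pM2r ?invr_gt0 // ler_pdivrMr // ler_pM2l ?ler_nat.
set y := K%:R * ellK R K * x / delta.
have y_ge0 : 0 <= y by rewrite divr_ge0 ?mulr_ge0 // ltW.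
have x_gtE : (delta * s%:R / (K%:R * ellK R K) < x) = (s%:~R < y).
  by rewrite /y ltr_pdivrMr ?mulr_gt0 // ltr_pdivlMr // mulrC [x * _]mulrC.
rewrite x_gtE -ceil_gt_int; have [c0|c_neq0] := eqVneq (Num.ceil y) 0.
  by rewrite c0; split.
have c_gt0 : 0 < Num.ceil y.
  by rewrite lt_neqAle eq_sym c_neq0 ceil_ge0 (lt_le_trans _ y_ge0) ?ltrN10.
rewrite lte_fin ltr_pM2l // ltf_pV2 ?posrE ?mulr_gt0 ?ltr0z //.
by rewrite ltr_pM2l // -[s%:R]/(s%:Z%:~R) ltr_int.
Qed.

Lemma BY_level_ge0_lt1 {R : realType} {delta : R} {K s : nat} :
  0 < delta < 1 -> (0 < s <= K)%N ->
  0 <= delta * s%:R / (K%:R * ellK R K) < 1.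
Proof.
move=> /andP[d0 d1] /andP[s0 sK].
have K0 : (0 < K)%N := leq_trans s0 sK.
have lK_ge1 : 1 <= ellK R K := ellK_ge1 R K K0.
have lK_gt0 : 0 < K%:R * ellK R K by rewrite mulr_gt0 ?ltr0n ?(lt_le_trans ltr01).
rewrite divr_ge0 ?(ltW lK_gt0) ?mulr_ge0 ?ler0n ?(ltW d0) //= ltr_pdivrMr // mul1r.
apply: lt_le_trans (_ : 1 * K%:R <= _); last by rewrite mulrC ler_pM2l ?ltr0n.
by rewrite mul1r (@lt_le_trans _ _ s%:R) ?ler_nat // gtr_pMl ?ltr0n.
Qed.

Theorem corollary1 (R : realType) (d : measure_display) (Omega : measurableType d)
    (P : probability Omega R) (K : nat) (delta : R)
    (Theta : 'I_K -> Type) (theta : forall i, Theta i)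
    (C : forall i : 'I_K, R -> Omega -> set (Theta i)) :
  0 < delta < 1 ->
  (forall i w, nonincreasing_CI (fun a => C i a w)) ->
  (forall i w, usc_CI (fun a => C i a w)) ->
  (forall i (a : R), (0 <= a <= 1)%R ->
     (1 - a)%:E <= P [set w | C i a w (theta i)])%E ->
  forall (w : Omega) (S : {set 'I_K}) (i : 'I_K), i \in S ->
    C i (delta * #|S|%:R / (K%:R * ellK R K)) w =
    calibrate (fBY delta K) (fun a => C i a w) (delta * #|S|%:R / K%:R).
Proof.
move=> delta01 C_noninc C_usc _ w S i iS.
have d0 : 0 < delta by case/andP: delta01.
have S_card : (0 < #|S| <= K)%N.
  rewrite card_gt0 -[X in (_ <= X)%N]card_ord max_card andbT.
  by apply/set0Pn; exists i.
apply: funext => t; apply/propext; rewrite /calibrate /=.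
apply: iff_trans (CI_mem_lt_pdual (C_noninc i w) (C_usc i w) t _
                   (BY_level_ge0_lt1 delta01 S_card)) _.
by apply: iff_sym; apply: fBY_lt_inv => //; apply: pdual_ge0.
Qed.
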